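(* Let $\mathcal{H}$ be an $n$-dimensional (real or complex) Hilbert space, let $F=\{f_i\}_{i=1}^N$ be a frame for $\mathcal{H}$, and let $\{q_i\}_{i=1}^N$ be the weight number sequence associated with a probability sequence $\{p_i\}_{i=1}^N$. Then the set $\Delta_F^{(1)}$ of all 1-erasure probabilistic averaged spectrally optimal dual frames (PASOD-frames) of $F$ is convex.
   Context: A finite sequence $F=\{f_i\}_{i=1}^N$ in $\mathcal{H}$ is a frame if there are $A,B>0$ with $A\|f\|^2\le\sum_{i=1}^N|\langle f,f_i\rangle|^2\le B\|f\|^2$ for all $f\in\mathcal{H}$. A frame $G=\{g_i\}_{i=1}^N$ is a dual frame of $F$ if $f=\sum_{i=1}^N\langle f,f_i\rangle g_i=\sum_{i=1}^N\langle f,g_i\rangle f_i$ for all $f\in\mathcal{H}$. A probability sequence is $\{p_i\}_{i=1}^N$ with $0\le p_i\le 1$ and $\sum_{i=1}^N p_i=1$; its weight numbers are $q_i=\frac{\sum_{j=1}^N p_j}{\sum_{j=1}^N p_j-p_i}\cdot\frac{N-1}{n}$. For $\Lambda\subseteq\{1,\dots,N\}$ and a dual $G$ of $F$, the error operator is $E_{\Lambda,(F,G)}f=\sum_{i\in\Lambda}q_i\langle f,f_i\rangle g_i$. Define $\mathcal{A}_P^{(1)}(F,G)=\max_{|\Lambda|=1}\frac{\|E_{\Lambda,(F,G)}\|+\rho(E_{\Lambda,(F,G)})}{2}$, where $\|\cdot\|$ is the operator norm and $\rho$ the spectral radius, and $\mathcal{A}_P^{(1)}(F)=\inf\{\mathcal{A}_P^{(1)}(F,G):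 G \text{ a dual of } F\}$. A dual $G$ of $F$ is a 1-erasure PASOD-frame of $F$ if $\mathcal{A}_P^{(1)}(F,G)=\mathcal{A}_P^{(1)}(F)$; $\Delta_F^{(1)}$ denotes the set of these. *)

From mathcomp Require Import all_boot all_order all_algebra.
From mathcomp Require Import classical_sets reals.
From mathcomp.real_closed Require Import complex.

Set Implicit Arguments.
Unset Strict Implicit.
Unset Printing Implicit Defensive.

Import Order.TTheory GRing.Theory Num.Theory.
Local Open Scope classical_set_scope.
Local Open Scope ring_scope.

(* The n-dimensional Hilbert space H is modelled as K^n (column vectors),
   K = R or K = C = R[i].  Both are realised inside 'cV[R[i]]_n:
   the real space R^n is the set of vectors with real (zero-imaginary) entries. *)
Inductive scalar_field := RealField | ComplexField.

Section Frames.
Variable R : realType.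
Local Notation C := R[i].

Definition is_scalar (k : scalar_field) (z : C) : Prop :=
  if k is RealField then Im z = 0 else True.

Definition inH (k : scalar_field) (n : nat) (x : 'cV[C]_n) : Prop :=
  forall j, is_scalar k (x j 0).

Definition absc (z : C) : R := Normc.normc z.

Definition inner (n : nat) (x y : 'cV[C]_n) : C :=
  \sum_(j < n) x j 0 * conjc (y j 0).

Definition hnorm (n : nat) (x : 'cV[C]_n) : R :=
  Num.sqrt (\sum_(j < n) absc (x j 0) ^+ 2).

Definition is_frame (k : scalar_field) (n N : nat) (F : 'I_N -> 'cV[C]_n) : Prop :=
  (forall i, inH k (F i)) /\
  exists A B : R, 0 < A /\ 0 < B /\
    forall f, inH k f ->
      A * hnorm f ^+ 2 <= \sum_(i < N) absc (inner f (F i)) ^+ 2 /\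
      \sum_(i < N) absc (inner f (F i)) ^+ 2 <= B * hnorm f ^+ 2.

Definition is_dual (k : scalar_field) (n N : nat) (F G : 'I_N -> 'cV[C]_n) : Prop :=
  is_frame k G /\
  forall f, inH k f ->
    f = \sum_(i < N) inner f (F i) *: G i /\
    f = \sum_(i < N) inner f (G i) *: F i.

Definition prob_seq (N : nat) (p : 'I_N -> R) : Prop :=
  (forall i, 0 <= p i <= 1) /\ \sum_(i < N) p i = 1.

Definition weight (n N : nat) (p : 'I_N -> R) (i : 'I_N) : R :=
  (\sum_(j < N) p j) / (\sum_(j < N) p j - p i) * ((N%:R - 1) / n%:R).

(* error operator E_{Lambda,(F,G)} f = sum_{i in Lambda} q_i <f,f_i> g_i,
   as the matrix  sum_{i in Lambda} q_i g_i f_i^*  acting on column vectors *)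
Definition err_op (n N : nat) (q : 'I_N -> R) (L : {set 'I_N})
    (F G : 'I_N -> 'cV[C]_n) : 'M[C]_n :=
  \sum_(i in L) (real_complex R (q i)) *: (G i *m \row_(j < n) conjc (F i j 0)).

Definition opnorm (k : scalar_field) (n : nat) (T : 'M[C]_n) : R :=
  sup [set hnorm (T *m x) | x in [set x | inH k x /\ hnorm x = 1]].

(* (complex) eigenvalues; for real H this is the spectrum of the complexification *)
Definition is_eigenvalue (n : nat) (T : 'M[C]_n) (l : C) : Prop :=
  exists x : 'cV[C]_n, x != 0 /\ T *m x = l *: x.

Definition specrad (n : nat) (T : 'M[C]_n) : R :=
  sup [set absc l | l in [set l | is_eigenvalue T l]].

Definition AP1 (k : scalar_field) (n N : nat) (p : 'I_N -> R)
    (F G : 'I_N -> 'cV[C]_n) : R :=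
  \big[Num.max/0]_(L : {set 'I_N} | #|L| == 1%N)
     ((opnorm k (err_op (weight n p) L F G) +
       specrad (err_op (weight n p) L F G)) / 2).

Definition AP1_opt (k : scalar_field) (n N : nat) (p : 'I_N -> R)
    (F : 'I_N -> 'cV[C]_n) : R :=
  inf [set AP1 k p F G | G in [set G | is_dual k F G]].

Definition PASOD1 (k : scalar_field) (n N : nat) (p : 'I_N -> R)
    (F : 'I_N -> 'cV[C]_n) : set ('I_N -> 'cV[C]_n) :=
  [set G | is_dual k F G /\ AP1 k p F G = AP1_opt k p F].

Definition convex_frames (n N : nat) (S : set ('I_N -> 'cV[C]_n)) : Prop :=
  forall G1 G2, S G1 -> S G2 -> forall t : R, 0 <= t <= 1 ->
    S (fun i => real_complex R t *: G1 i + real_complex R (1 - t) *: G2 i).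

End Frames.

(* Real convex combinations of two dual frames of F are again dual frames: the
   reconstruction formulas are affine in G, the upper frame bound of the
   combination is the combination of the upper bounds, and any G with
   f = sum <f, g_i> f_i has lower frame bound 1/B when B is an upper bound of F.
   On the other hand G |-> A_P^(1)(F, G) is convex: for a single erasure the
   error operator is the rank-one operator (q_i g_i) f_i^*, which is affine in G;
   its operator norm is a convex function of it, and its spectral radius is
   |q_i <g_i, f_i>|, again convex in G.  So a convex combination of two
   minimisers is a dual frame whose value is at most the minimum, hence a
   minimiser. *)

From mathcomp Require Import all_boot all_order all_algebra.
From mathcomp Require Import classical_sets reals.
From mathcomp.real_closed Require Import complex.
From mathcomp Require Import ring lra.
Import Order.TTheory GRing.Theory Num.Theory.
Local Open Scope classical_set_scope.
Local Open Scope ring_scope.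
Local Open Scope complex_scope.

Section CauchySchwarz.
Variables (R : rcfType) (I : finType).
Implicit Types a b : I -> R.

Lemma CauchySchwarz_sum a b :
  (\sum_i a i * b i) ^+ 2 <= (\sum_i a i ^+ 2) * \sum_i b i ^+ 2.
Proof.
set A := \sum_i a i ^+ 2; set B := \sum_i b i ^+ 2; set S := \sum_i a i * b i.
have B_ge0 : 0 <= B by apply: sumr_ge0 => i _; apply: sqr_ge0.
have [B0 | B_neq0] := eqVneq B 0.
  have b0 i : b i = 0.
    by apply/eqP; rewrite -sqrf_eq0; apply/eqP/(psumr_eq0P _ B0) => // j _; apply: sqr_ge0.
  by rewrite /S big1 ?expr0n ?B0 ?mulr0 // => i _; rewrite b0 mulr0.
have B_gt0 : 0 < B by rewrite lt_def B_neq0.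
have : 0 <= \sum_i (B * a i - S * b i) ^+ 2 by apply: sumr_ge0 => i _; apply: sqr_ge0.
have expand i : (B * a i - S * b i) ^+ 2 =
    B ^+ 2 * a i ^+ 2 - (2 * B * S) * (a i * b i) + S ^+ 2 * b i ^+ 2 by ring.
rewrite (eq_bigr _ (fun i _ => expand i)) big_split sumrB /= -!mulr_sumr -/A -/B -/S.
have -> : B ^+ 2 * A - 2 * B * S * S + S ^+ 2 * B = B * (A * B - S ^+ 2) by ring.
by rewrite pmulr_rge0 // subr_ge0.
Qed.

Lemma CauchySchwarz_sum_sqrt a b :
  \sum_i a i * b i <= Num.sqrt (\sum_i a i ^+ 2) * Num.sqrt (\sum_i b i ^+ 2).
Proof.
have sqr_sum_ge0 c : 0 <= \sum_i c i ^+ 2 :> R by apply: sumr_ge0 => i _; apply: sqr_ge0.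
rewrite -sqrtrM //; apply: le_trans (ler_norm _) _; rewrite -sqrtr_sqr ler_sqrt ?mulr_ge0 //.
exact: CauchySchwarz_sum.
Qed.
End CauchySchwarz.

Section RealInequalities.
Context {R : realFieldType}.

Lemma sqr_convex (t a b : R) : 0 <= t <= 1 ->
  (t * a + (1 - t) * b) ^+ 2 <= t * a ^+ 2 + (1 - t) * b ^+ 2.
Proof.
case/andP => t_ge0 t_le1; rewrite -subr_ge0.
have -> : t * a ^+ 2 + (1 - t) * b ^+ 2 - (t * a + (1 - t) * b) ^+ 2 =
          t * (1 - t) * (a - b) ^+ 2 by ring.
by rewrite mulr_ge0 ?sqr_ge0 ?mulr_ge0 ?subr_ge0.
Qed.

Lemma mul_le_amgm (B a b : R) : 0 < B -> a * b <= (B * a ^+ 2 + B^-1 * b ^+ 2) / 2.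
Proof.
move=> B_gt0; rewrite -subr_ge0.
have -> : (B * a ^+ 2 + B^-1 * b ^+ 2) / 2 - a * b = B^-1 * (B * a - b) ^+ 2 / 2.
  by field; rewrite gt_eqF.
by apply: divr_ge0 => //; apply: mulr_ge0; [rewrite invr_ge0 ltW | apply: sqr_ge0].
Qed.

End RealInequalities.

Section Frames.
Context {R : realType}.
Local Notation C := R[i].

Lemma abscE (z : C) : (absc z)%:C = `|z|.
Proof. by []. Qed.

Lemma absc_ge0 (z : C) : 0 <= absc z.
Proof. by rewrite -ler0c abscE normr_ge0. Qed.

Lemma ler_abscD (x y : C) : absc (x + y) <= absc x + absc y.
Proof. by rewrite -lecR rmorphD /= !abscE ler_normD. Qed.

Lemma abscM (x y : C) : absc (x * y) = absc x * absc y.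
Proof. by apply: complexI; rewrite rmorphM /= !abscE normrM. Qed.

Lemma abscJ (x : C) : absc (conjc x) = absc x.
Proof. by apply: complexI; rewrite !abscE normcJ. Qed.

Lemma absc_real (t : R) : absc t%:C = `|t|.
Proof. by apply: complexI; rewrite abscE normc_def /= expr0n /= addr0 sqrtr_sqr. Qed.

Lemma absc0 : absc (0 : C) = 0.
Proof. by rewrite -[0]/(0%:C) absc_real normr0. Qed.

Lemma ler_absc_sum (I : finType) (P : pred I) (F : I -> C) :
  absc (\sum_(i | P i) F i) <= \sum_(i | P i) absc (F i).
Proof.
rewrite -lecR rmorph_sum /= abscE; apply: le_trans (ler_norm_sum _ _ _) _.
by apply: ler_sum => i _; rewrite abscE.
Qed.

Lemma absc_convex (t : R) (a b : C) : 0 <= t <= 1 ->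
  absc (t%:C * a + (1 - t)%:C * b) <= t * absc a + (1 - t) * absc b.
Proof.
case/andP => t_ge0 t_le1; have t1_ge0 : 0 <= 1 - t by rewrite subr_ge0.
by apply: le_trans (ler_abscD _ _) _; rewrite !abscM !absc_real !ger0_norm.
Qed.

Section HilbertSpace.
Context {n : nat}.
Implicit Types x y u v w : 'cV[C]_n.

Lemma hnorm_ge0 x : 0 <= hnorm x.
Proof. exact: sqrtr_ge0. Qed.

Lemma sqr_hnorm x : hnorm x ^+ 2 = \sum_(j < n) absc (x j 0) ^+ 2.
Proof. by rewrite sqr_sqrtr // sumr_ge0 // => j _; apply: sqr_ge0. Qed.

Lemma hnorm0 : hnorm (0 : 'cV[C]_n) = 0.
Proof. by rewrite /hnorm big1 ?sqrtr0 // => j _; rewrite mxE absc0 expr0n. Qed.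

Lemma hnormZ (c : C) x : hnorm (c *: x) = absc c * hnorm x.
Proof.
rewrite /hnorm -[absc c]ger0_norm ?absc_ge0 // -sqrtr_sqr -sqrtrM ?sqr_ge0 //.
by rewrite mulr_sumr; congr Num.sqrt; apply: eq_bigr => j _; rewrite mxE abscM exprMn.
Qed.

Lemma ler_hnormD x y : hnorm (x + y) <= hnorm x + hnorm y.
Proof.
rewrite -(ger0_norm (addr_ge0 (hnorm_ge0 x) (hnorm_ge0 y))) -sqrtr_sqr.
rewrite ler_sqrt ?sqr_ge0 // sqrrD !sqr_hnorm.
apply: le_trans (_ : \sum_j (absc (x j 0) + absc (y j 0)) ^+ 2 <= _).
  apply: ler_sum => j _; rewrite mxE lerXn2r ?nnegrE ?addr_ge0 ?absc_ge0 //.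
  exact: ler_abscD.
rewrite (eq_bigr _ (fun j _ => sqrrD _ _)) !big_split /=.
by rewrite lerD2r lerD2l mulr2n; apply: lerD; apply: CauchySchwarz_sum_sqrt.
Qed.

Lemma ler_hnorm_sum (I : finType) (P : pred I) (v : I -> 'cV[C]_n) :
  hnorm (\sum_(i | P i) v i) <= \sum_(i | P i) hnorm (v i).
Proof.
elim/big_ind2: _ => [|x1 r1 x2 r2 h1 h2|//]; first by rewrite hnorm0.
exact: le_trans (ler_hnormD _ _) (lerD h1 h2).
Qed.

Lemma absc_le_hnorm x j : absc (x j 0) <= hnorm x.
Proof.
rewrite -(ger0_norm (absc_ge0 (x j 0))) -sqrtr_sqr ler_sqrt ?sumr_ge0 //.
  by rewrite (bigD1 j) //= lerDl sumr_ge0 // => i _; apply: sqr_ge0.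
by move=> i _; apply: sqr_ge0.
Qed.

Lemma innerDl u v w : inner (u + v) w = inner u w + inner v w.
Proof. by rewrite /inner -big_split; apply: eq_bigr => j _; rewrite mxE mulrDl. Qed.

Lemma innerZl (c : C) u w : inner (c *: u) w = c * inner u w.
Proof. by rewrite /inner mulr_sumr; apply: eq_bigr => j _; rewrite mxE mulrA. Qed.

Lemma innerDr u v w : inner w (u + v) = inner w u + inner w v.
Proof. by rewrite /inner -big_split; apply: eq_bigr => j _; rewrite mxE rmorphD mulrDr. Qed.

Lemma innerZr_real (t : R) u w : inner w (t%:C *: u) = t%:C * inner w u.
Proof.
rewrite /inner mulr_sumr; apply: eq_bigr => j _.
by rewrite mxE rmorphM /= oppr0 complexr0 mulrCA.
Qed.

Lemma innerC u v : inner v u = conjc (inner u v).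
Proof. by rewrite /inner rmorph_sum; apply: eq_bigr => j _; rewrite rmorphM /= conjcK mulrC. Qed.

Lemma inner0l w : inner 0 w = 0.
Proof. by rewrite /inner big1 // => j _; rewrite mxE mul0r. Qed.

Lemma inner_suml (I : finType) (c : I -> C) (v : I -> 'cV[C]_n) w :
  inner (\sum_i c i *: v i) w = \sum_i c i * inner (v i) w.
Proof.
rewrite /inner; under eq_bigr do rewrite summxE mulr_suml.
rewrite exchange_big /=; apply: eq_bigr => i _; rewrite mulr_sumr.
by apply: eq_bigr => j _; rewrite mxE mulrA.
Qed.

Lemma inner_self u : inner u u = (hnorm u ^+ 2)%:C.
Proof.
rewrite sqr_hnorm rmorph_sum /inner; apply: eq_bigr => j _.
by rewrite rmorphXn /= abscE sqr_normc.
Qed.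

End HilbertSpace.

Lemma sup_ge0 (S : set R) : has_ubound S -> (forall x, S x -> 0 <= x) -> 0 <= sup S.
Proof.
move=> ubS S_ge0; have [->|/set0P[x Sx]] := eqVneq S set0; first by rewrite sup0.
exact: le_trans (S_ge0 x Sx) (ub_le_sup ubS Sx).
Qed.

Lemma ge0_ge_sup (S : set R) b : 0 <= b -> ubound S b -> sup S <= b.
Proof.
move=> b_ge0 Sb; have [->|/set0P S_neq0] := eqVneq S set0; first by rewrite sup0.
exact: ge_sup.
Qed.

Section OperatorNorm.
Variable k : scalar_field.
Context {n : nat}.
Implicit Types (A B T : 'M[C]_n) (x : 'cV[C]_n).

Local Notation unit_sphere := [set x : 'cV[C]_n | inH k x /\ hnorm x = 1].

Lemma mulmx_cols T x : T *m x = \sum_(j < n) x j 0 *: col j T.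
Proof.
apply/matrixP => i a; rewrite !mxE summxE; apply: eq_bigr => j _.
by rewrite !mxE (ord1 a) mulrC.
Qed.

Lemma opnorm_has_ubound T : has_ubound [set hnorm (T *m x) | x in unit_sphere].
Proof.
exists (\sum_(j < n) hnorm (col j T)) => _ [x [_ x1] <-].
rewrite mulmx_cols; apply: le_trans (ler_hnorm_sum _ _ _) _.
apply: ler_sum => j _; rewrite hnormZ -[leRHS]mul1r ler_wpM2r ?hnorm_ge0 //.
by rewrite -x1 absc_le_hnorm.
Qed.

Lemma opnorm_ge0 T : 0 <= opnorm k T.
Proof. by apply: sup_ge0 (opnorm_has_ubound T) _ => _ [x _ <-]; apply: hnorm_ge0. Qed.

Lemma ler_opnorm T x : inH k x -> hnorm x = 1 -> hnorm (T *m x) <= opnorm k T.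
Proof. by move=> Hx x1; apply: ub_le_sup (opnorm_has_ubound T) _ _; exists x. Qed.

Lemma ler_opnormD A B : opnorm k (A + B) <= opnorm k A + opnorm k B.
Proof.
apply: ge0_ge_sup; first by rewrite addr_ge0 ?opnorm_ge0.
move=> _ [x [Hx x1] <-]; rewrite mulmxDl.
exact: le_trans (ler_hnormD _ _) (lerD (ler_opnorm A _ Hx x1) (ler_opnorm B _ Hx x1)).
Qed.

Lemma ler_opnormZ (c : C) T : opnorm k (c *: T) <= absc c * opnorm k T.
Proof.
apply: ge0_ge_sup; first by rewrite mulr_ge0 ?absc_ge0 ?opnorm_ge0.
move=> _ [x [Hx x1] <-]; rewrite -scalemxAl hnormZ.
by rewrite ler_wpM2l ?absc_ge0 ?ler_opnorm.
Qed.

Lemma opnorm_convex A B (t : R) : 0 <= t <= 1 ->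
  opnorm k (t%:C *: A + (1 - t)%:C *: B) <= t * opnorm k A + (1 - t) * opnorm k B.
Proof.
case/andP => t_ge0 t_le1; have t1_ge0 : 0 <= 1 - t by rewrite subr_ge0.
apply: le_trans (ler_opnormD _ _) _.
by apply: lerD; apply: le_trans (ler_opnormZ _ _) _; rewrite absc_real ger0_norm.
Qed.

End OperatorNorm.

Section RankOne.
Context {n : nat}.
Implicit Types (u v x : 'cV[C]_n) (l : C).

Definition outer u v : 'M[C]_n := u *m \row_(j < n) conjc (v j 0).

Lemma mul_outer u v x : outer u v *m x = inner x v *: u.
Proof.
rewrite -mulmxA -mul_mx_scalar; congr (_ *m _).
apply/matrixP => a b; rewrite (ord1 a) (ord1 b) !mxE /inner /=.
by apply: eq_bigr => j _; rewrite !mxE mulrC.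
Qed.

Lemma eigenvalue_outer u v l : is_eigenvalue (outer u v) l -> l != 0 -> l = inner u v.
Proof.
move=> [x [x_neq0 Hx]] l_neq0; rewrite mul_outer in Hx.
have xv_neq0 : inner x v != 0.
  apply: contraNneq x_neq0 => xv0; move: Hx; rewrite xv0 scale0r.
  by move/esym/eqP; rewrite scaler_eq0 (negbTE l_neq0).
by apply: (mulIf xv_neq0); rewrite -innerZl -Hx innerZl mulrC.
Qed.

Lemma is_eigenvalue_outer u v : u != 0 -> is_eigenvalue (outer u v) (inner u v).
Proof. by move=> u_neq0; exists u; rewrite mul_outer. Qed.

Lemma specrad_outer_ub u v :
  ubound [set absc l | l in [set l | is_eigenvalue (outer u v) l]] (absc (inner u v)).
Proof.
move=> _ [l Hl <-]; have [->|l_neq0] := eqVneq l 0; first by rewrite absc0 absc_ge0.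
by rewrite (eigenvalue_outer _ _ _ Hl l_neq0).
Qed.

Lemma specrad_outer u v : specrad (outer u v) = absc (inner u v).
Proof.
apply/eqP; rewrite eq_le; apply/andP; split.
  exact: ge0_ge_sup (absc_ge0 _) (specrad_outer_ub u v).
have ub := ex_intro _ _ (specrad_outer_ub u v).
have [u0|u_neq0] := eqVneq u 0.
  rewrite [u in inner u v]u0 inner0l absc0.
  by apply: sup_ge0 ub _ => _ [l _ <-]; apply: absc_ge0.
by apply: ub_le_sup ub _ _; exists (inner u v) => //; apply: is_eigenvalue_outer.
Qed.

End RankOne.

Section Duals.
Context {n N : nat}.
Implicit Types (k : scalar_field) (f u v : 'cV[C]_n) (F G : 'I_N -> 'cV[C]_n).

Definition frame_comb (t : R) G1 G2 : 'I_N -> 'cV[C]_n :=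
  fun i => t%:C *: G1 i + (1 - t)%:C *: G2 i.

Definition bessel k G (B : R) :=
  forall f, inH k f -> \sum_i absc (inner f (G i)) ^+ 2 <= B * hnorm f ^+ 2.

Lemma inH_comb k (t : R) u v :
  inH k u -> inH k v -> inH k (t%:C *: u + (1 - t)%:C *: v).
Proof.
case: k => // Hu Hv j.
have real_c (s : R) : s%:C \is Num.real by apply/complex_realP; exists s.
by rewrite /= !mxE raddfD /= !ImMl ?real_c // (Hu j) (Hv j) !mulr0 addr0.
Qed.

Lemma scaler_comb_id (t : R) v : t%:C *: v + (1 - t)%:C *: v = v.
Proof. by rewrite -scalerDl -rmorphD /= addrC subrK scale1r. Qed.

Lemma synthesis_comb (t : R) F G1 G2 f :
  f = \sum_i inner f (F i) *: G1 i -> f = \sum_i inner f (F i) *: G2 i ->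
  f = \sum_i inner f (F i) *: frame_comb t G1 G2 i.
Proof.
move=> E1 E2.
under eq_bigr do rewrite scalerDr !scalerA !(mulrC (inner _ _)) -!scalerA.
by rewrite big_split /= -!scaler_sumr -E1 -E2 scaler_comb_id.
Qed.

Lemma analysis_comb (t : R) F G1 G2 f :
  f = \sum_i inner f (G1 i) *: F i -> f = \sum_i inner f (G2 i) *: F i ->
  f = \sum_i inner f (frame_comb t G1 G2 i) *: F i.
Proof.
move=> E1 E2; under eq_bigr do rewrite innerDr !innerZr_real scalerDl -!scalerA.
by rewrite big_split /= -!scaler_sumr -E1 -E2 scaler_comb_id.
Qed.

Lemma bessel_comb k (t B1 B2 : R) G1 G2 : 0 <= t <= 1 ->
  bessel k G1 B1 -> bessel k G2 B2 ->
  bessel k (frame_comb t G1 G2) (t * B1 + (1 - t) * B2).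
Proof.
move=> t01 G1B G2B f Hf; have /andP[t_ge0 t_le1] := t01.
have t1_ge0 : 0 <= 1 - t by rewrite subr_ge0.
apply: le_trans (_ : _ <= \sum_i (t * absc (inner f (G1 i)) ^+ 2 +
                                   (1 - t) * absc (inner f (G2 i)) ^+ 2)) _.
  apply: ler_sum => i _; apply: le_trans _ (sqr_convex _ _ _ t01).
  rewrite /frame_comb innerDr !innerZr_real lerXn2r ?nnegrE ?absc_ge0 ?absc_convex //.
  by rewrite addr_ge0 ?mulr_ge0 ?absc_ge0.
rewrite big_split /= -!mulr_sumr [_ * hnorm f ^+ 2]mulrDl -!mulrA.
by apply: lerD; apply: ler_wpM2l => //; [apply: G1B | apply: G2B].
Qed.

Lemma dual_lower_bound k (B : R) F G : 0 < B -> bessel k F B ->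
    (forall f, inH k f -> f = \sum_i inner f (G i) *: F i) ->
  forall f, inH k f -> B^-1 * hnorm f ^+ 2 <= \sum_i absc (inner f (G i)) ^+ 2.
Proof.
move=> B_gt0 FB expand f Hf.
set SG := \sum_i _; have SF_le := FB f Hf; set SF := \sum_i _ in SF_le.
have BV_ge0 : 0 <= B^-1 by rewrite invr_ge0 ltW.
have BVB : B^-1 * B = 1 by rewrite mulVf ?gt_eqF.
have cross : hnorm f ^+ 2 <= \sum_i absc (inner f (G i)) * absc (inner f (F i)).
  rewrite -[leLHS]ger0_norm ?sqr_ge0 // -absc_real -inner_self {1}(expand f Hf).
  rewrite inner_suml.
  apply: le_trans (ler_absc_sum _ _ _) _; apply: ler_sum => i _.
  by rewrite abscM [inner (F i) f]innerC abscJ.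
have amgm : \sum_i absc (inner f (G i)) * absc (inner f (F i)) <=
            (B * SG + B^-1 * SF) / 2.
  rewrite /SG /SF !mulr_sumr -big_split mulr_suml /=.
  by apply: ler_sum => i _; apply: mul_le_amgm.
have BVSF : B^-1 * SF <= hnorm f ^+ 2.
  by rewrite -[leRHS]mul1r -BVB -mulrA ler_wpM2l.
have : hnorm f ^+ 2 <= B * SG by lra.
by move/(ler_wpM2l BV_ge0); rewrite [B^-1 * (B * SG)]mulrA BVB mul1r.
Qed.

Lemma frame_bessel k F : is_frame k F -> exists2 B : R, 0 < B & bessel k F B.
Proof. by move=> [_ [A [B [_ [B_gt0 bounds]]]]]; exists B => // f /bounds[]. Qed.

Lemma dual_comb k (t : R) F G1 G2 : is_frame k F -> 0 <= t <= 1 ->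
  is_dual k F G1 -> is_dual k F G2 -> is_dual k F (frame_comb t G1 G2).
Proof.
move=> /frame_bessel[BF BF_gt0 FB] t01 [G1_frame G1_dual] [G2_frame G2_dual].
have /frame_bessel[B1 B1_gt0 G1B] := G1_frame.
have /frame_bessel[B2 B2_gt0 G2B] := G2_frame.
have /andP[t_ge0 t_le1] := t01.
have analysis f : inH k f -> f = \sum_i inner f (frame_comb t G1 G2 i) *: F i.
  by move=> Hf; apply: analysis_comb; [exact: (G1_dual f Hf).2 | exact: (G2_dual f Hf).2].
split; last first.
  move=> f Hf; split; last exact: analysis.
  by apply: synthesis_comb; [exact: (G1_dual f Hf).1 | exact: (G2_dual f Hf).1].
split; first by move=> i; apply: inH_comb; [exact: G1_frame.1 | exact: G2_frame.1].
exists BF^-1, (t * B1 + (1 - t) * B2); split; first by rewrite invr_gt0.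
split; first by nra.
move=> f Hf; split; first exact: dual_lower_bound FB analysis f Hf.
exact: bessel_comb t01 G1B G2B f Hf.
Qed.

End Duals.

Section ErrorOperator.
Context {n N : nat}.
Implicit Types (k : scalar_field) (p q : 'I_N -> R) (F G : 'I_N -> 'cV[C]_n).

Lemma err_op1 q i F G : err_op q [set i] F G = outer ((q i)%:C *: G i) (F i).
Proof. by rewrite /err_op big_set1 /outer scalemxAl. Qed.

Lemma err_op_comb q L F G1 G2 (t : R) :
  err_op q L F (frame_comb t G1 G2) =
  t%:C *: err_op q L F G1 + (1 - t)%:C *: err_op q L F G2.
Proof.
rewrite /err_op !scaler_sumr -big_split; apply: eq_bigr => i _.
by rewrite mulmxDl scalerDr -!scalemxAl !scalerA ![_ * (q i)%:C]mulrC.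
Qed.

Lemma specrad_err_op1_convex q i F G1 G2 (t : R) : 0 <= t <= 1 ->
  specrad (err_op q [set i] F (frame_comb t G1 G2)) <=
  t * specrad (err_op q [set i] F G1) + (1 - t) * specrad (err_op q [set i] F G2).
Proof.
move=> t01; rewrite !err_op1 !specrad_outer /frame_comb scalerDr !scalerA.
by rewrite !(mulrC (q i)%:C) -!scalerA innerDl !innerZl; apply: absc_convex.
Qed.

Lemma AP1_ge0 k p F G : 0 <= AP1 k p F G.
Proof. exact: bigmax_ge_id. Qed.

Lemma AP1_ge_err_op1 k p F G i :
  (opnorm k (err_op (weight n p) [set i] F G) +
   specrad (err_op (weight n p) [set i] F G)) / 2 <= AP1 k p F G.
Proof.
apply: (le_bigmax_cond _ (fun L => (opnorm k (err_op (weight n p) L F G) +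
                                    specrad (err_op (weight n p) L F G)) / 2)).
by rewrite cards1.
Qed.

Lemma AP1_convex k p F G1 G2 (t : R) : 0 <= t <= 1 ->
  AP1 k p F (frame_comb t G1 G2) <= t * AP1 k p F G1 + (1 - t) * AP1 k p F G2.
Proof.
move=> t01; have /andP[t_ge0 t_le1] := t01; have t1_ge0 : 0 <= 1 - t by rewrite subr_ge0.
apply: bigmax_le => [|L /cards1P[i ->]]; first by rewrite addr_ge0 ?mulr_ge0 ?AP1_ge0.
have avg_le (o s o1 s1 o2 s2 : R) :
    o <= t * o1 + (1 - t) * o2 -> s <= t * s1 + (1 - t) * s2 ->
    (o + s) / 2 <= t * ((o1 + s1) / 2) + (1 - t) * ((o2 + s2) / 2).
  by move=> *; lra.
set E := err_op (weight n p) [set i] F.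
have opn := opnorm_convex k (E G1) (E G2) t t01; rewrite -err_op_comb in opn.
apply: le_trans (avg_le _ _ _ _ _ _ opn (specrad_err_op1_convex _ i F G1 G2 t t01)) _.
by apply: lerD; apply: ler_wpM2l => //; apply: AP1_ge_err_op1.
Qed.

Lemma AP1_opt_le k p F G : is_dual k F G -> AP1_opt k p F <= AP1 k p F G.
Proof.
by move=> G_dual; apply: ge_inf; [exists 0 => _ [H _ <-]; apply: AP1_ge0 | exists G].
Qed.

End ErrorOperator.
End Frames.


Theorem theorem3p1 (R : realType) (k : scalar_field) (n N : nat)
    (F : 'I_N -> 'cV[R[i]]_n) (p : 'I_N -> R) :
  is_frame k F -> prob_seq p ->
  convex_frames (PASOD1 k p F).
Proof.
(* Convexity holds for arbitrary weights q_i. *)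
move=> F_frame _ G1 G2 [G1_dual G1_opt] [G2_dual G2_opt] t t01.
have Gt_dual : is_dual k F (frame_comb t G1 G2) by apply: dual_comb.
split; first exact: Gt_dual.
apply/eqP; rewrite eq_le AP1_opt_le ?andbT; last exact: Gt_dual.
have := AP1_convex k p F G1 G2 t t01.
by rewrite G1_opt G2_opt -mulrDl addrC subrK mul1r.
Qed.
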